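(* Suppose $|\mathit{Obs}|>1$ and $m\ge1$. Then, over the class of all $m$-agent models, CTL*KΔ$_m$ is strictly more expressive than CTL*K$_m$: every CTL*K$_m$ formula is equivalent to some CTL*KΔ$_m$ formula, but there is a CTL*KΔ$_m$ formula that is not equivalent to any CTL*K$_m$ formula. Here two formulas $\varphi,\varphi'$ are equivalent if for every $m$-agent model $M$, $M\models\varphi$ iff $M\models\varphi'$.
   Context: Fix a countably infinite set $\mathit{AP}$ of atomic propositions, a finite nonempty set $\mathit{Obs}$ of observations, and a finite set of agents $\mathit{Ag}=\{a_1,\dots,a_m\}$. For a word $w$ we write $w_i$ for its letter at position $i$ (positions start at $0$), $w_{\le i}$ for its prefix ending at position $i$, $|w|$ for its length (finite words) and $\mathit{last}(w)$ for its last letter; $w\preceq w'$ means $w$ is a prefix of $w'$. Syntax of CTL*KΔ$_m$: history formulas $\varphi::=p\mid\neg\varphi\mid\varphi\wedge\varphi\mid\mathbf A\psi\mid\mathbf K_a\varphi\mid\Delta^{o}_a\varphi$ and path formulas $\psi::=\varphi\mid\neg\psi\mid\psi\wedge\psi\mid\mathbf X\psi\mid\psi\,\mathbf U\,\psi$, with $p\in\mathit{AP}$, $a\in\mathit{Ag}$, $o\in\mathit{Obs}$; formulas are history formulas. CTL*K$_m$ is the fragment of formulas containing no operator $\Delta^o_a$. A multiagent ($m$-agent) model is $M=(\mathit{AP}_f,S,T,V,\{\sim_o\}_{o\in\mathit{Obs}},s_\iota,\vec o_\iota)$ where $\mathit{AP}_f\subseteq\mathit{AP}$ is finite, $S$ is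 a finite set of states, $T\subseteq S\times S$ is left-total, $V:S\to2^{\mathit{AP}_f}$, each $\sim_o$ is an equivalence relation on $S$, $s_\iota\in S$, and $\vec o_\iota=(\vec o_{\iota,a})_{a\in\mathit{Ag}}\in\mathit{Obs}^{\mathit{Ag}}$ gives each agent an initial observation. Paths are infinite sequences of states $s_0s_1\dots$ with $s_iTs_{i+1}$ (starting anywhere); histories are finite nonempty prefixes of paths. An observation record is a finite word over $\mathit{Obs}\times\mathbb N$; $r_{=n}$ is the subword of $r$ consisting of the pairs with second component $n$. A record tuple is $\vec r=(\vec r_a)_{a\in\mathit{Ag}}$; $\vec r\cdot(o,n)_a$ is $\vec r$ with $\vec r_a$ replaced by $\vec r_a\cdot(o,n)$; $\vec\epsilon$ is the tuple of empty records. For agent $a$: $\mathit{ol}_a(\vec r,0)=\vec o_{\iota,a}\cdot o_1\cdots o_k$ if $(\vec r_a)_{=0}=(o_1,0)\cdots(o_k,0)$, and $\mathit{ol}_a(\vec r,n+1)=\mathit{last}(\mathit{ol}_a(\vec r,n))\cdot o_1\cdots o_k$ if $(\vec r_a)_{=n+1}=(o_1,n+1)\cdots(o_k,n+1)$. $h\approx^{\vec r}_a h'$ iff $|h|=|h'|$ and for all $i<|h|$ and all $o$ in $\mathit{ol}_a(\vec r,i)$, $h_i\sim_o h'_i$. Natural semantics: $h,\vec r\models p$ iff $p\in V(\mathit{last}(h))$; negation and conjunction as usual; $h,\vec r\models\mathbf A\psi$ iff for all paths $\pi$ with $h\preceq\pi$, $\pi,|h|-1,\vec r\models\psi$; $h,\vec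 r\models\mathbf K_a\varphi$ iff $h',\vec r\models\varphi$ for all histories $h'\approx^{\vec r}_a h$; $h,\vec r\models\Delta^o_a\varphi$ iff $h,\vec r\cdot(o,|h|-1)_a\models\varphi$; $\pi,n,\vec r\models\varphi$ iff $\pi_{\le n},\vec r\models\varphi$; negation and conjunction as usual; $\pi,n,\vec r\models\mathbf X\psi$ iff $\pi,n+1,\vec r\models\psi$; $\pi,n,\vec r\models\psi_1\mathbf U\psi_2$ iff there is $m'\ge n$ with $\pi,m',\vec r\models\psi_2$ and $\pi,j,\vec r\models\psi_1$ for all $n\le j<m'$. $M\models\varphi$ iff $s_\iota,\vec\epsilon\models\varphi$ ($s_\iota$ viewed as a one-state history). *)

From mathcomp Require Import all_boot.
Set Implicit Arguments.
Unset Strict Implicit.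
Unset Printing Implicit Defensive.

Section CTLKDelta.
Variable Obs : finType.
Variable m : nat.

(* Atomic propositions: AP = nat (countably infinite). *)
Inductive hform : Type :=
| HAtom of nat
| HNeg of hform
| HAnd of hform & hform
| HA of pform
| HK of 'I_m & hform
| HDelta of 'I_m & Obs & hform
with pform : Type :=
| PH of hform
| PNeg of pform
| PAnd of pform & pform
| PX of pform
| PU of pform & pform.

(* The CTL*K_m fragment: no Delta operator. *)
Fixpoint noDeltaH (f : hform) : bool :=
  match f with
  | HAtom _ => true
  | HNeg g => noDeltaH g
  | HAnd g1 g2 => noDeltaH g1 && noDeltaH g2
  | HA p => noDeltaP p
  | HK _ g => noDeltaH g
  | HDelta _ _ _ => false
  end
with noDeltaP (p : pform) : bool :=
  match p with
  | PH g => noDeltaH g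
  | PNeg q => noDeltaP q
  | PAnd q1 q2 => noDeltaP q1 && noDeltaP q2
  | PX q => noDeltaP q
  | PU q1 q2 => noDeltaP q1 && noDeltaP q2
  end.

Record model : Type := Model {
  mS : finType;
  mT : rel mS;
  mT_total : forall s, exists s', mT s s';
  mAPf : seq nat;
  mV : mS -> pred nat;
  mV_sub : forall s p, mV s p -> p \in mAPf;
  mSim : Obs -> rel mS;
  mSim_refl : forall o, reflexive (mSim o);
  mSim_sym : forall o, symmetric (mSim o);
  mSim_trans : forall o, transitive (mSim o);
  mInit : mS;
  mObsInit : 'I_m -> Obs
}.

Arguments mSim : clear implicits.
Arguments mInit : clear implicits.
Arguments mObsInit : clear implicits.
Arguments mT : clear implicits.
Arguments mV : clear implicits.

Definition orecord := seq (Obs * nat).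
Definition rtuple := 'I_m -> orecord.

Definition rempty : rtuple := fun _ => [::].

Definition rupd (r : rtuple) (a : 'I_m) (o : Obs) (n : nat) : rtuple :=
  fun b => if b == a then rcons (r a) (o, n) else r b.

Definition obs_at (ra : orecord) (n : nat) : seq Obs :=
  [seq x.1 | x <- ra & x.2 == n].

Fixpoint ol (oi : Obs) (ra : orecord) (n : nat) : seq Obs :=
  match n with
  | 0 => oi :: obs_at ra 0
  | n'.+1 => last oi (ol oi ra n') :: obs_at ra n'.+1
  end.

Section Semantics.
Variable M : model.
Local Notation S := (mS M).

Definition is_path (pi : nat -> S) : Prop := forall i, mT M (pi i) (pi i.+1).

Definition is_hist (h : seq S) : Prop :=
  h <> [::] /\
  forall i, i.+1 < size h -> mT M (nth (mInit M) h i) (nth (mInit M) h i.+1).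

Definition approx (a : 'I_m) (r : rtuple) (h h' : seq S) : Prop :=
  size h = size h' /\
  forall i, i < size h -> forall o, o \in ol (mObsInit M a) (r a) i ->
    mSim M o (nth (mInit M) h i) (nth (mInit M) h' i).

Definition prefix (pi : nat -> S) (n : nat) : seq S := mkseq pi n.+1.

Fixpoint hsat (h : seq S) (r : rtuple) (f : hform) {struct f} : Prop :=
  match f with
  | HAtom p => mV M (last (mInit M) h) p
  | HNeg g => ~ hsat h r g
  | HAnd g1 g2 => hsat h r g1 /\ hsat h r g2
  | HA q => forall pi, is_path pi ->
              (forall i, i < size h -> pi i = nth (mInit M) h i) ->
              psat pi (size h).-1 r q
  | HK a g => forall h', is_hist h' -> approx a r h' h -> hsat h' r g
  | HDelta a o g => hsat h (rupd r a o (size h).-1) g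
  end
with psat (pi : nat -> S) (n : nat) (r : rtuple) (q : pform) {struct q} : Prop :=
  match q with
  | PH g => hsat (prefix pi n) r g
  | PNeg q1 => ~ psat pi n r q1
  | PAnd q1 q2 => psat pi n r q1 /\ psat pi n r q2
  | PX q1 => psat pi n.+1 r q1
  | PU q1 q2 => exists m', n <= m' /\ psat pi m' r q2 /\
                  (forall j, n <= j < m' -> psat pi j r q1)
  end.

Definition models (f : hform) : Prop := hsat [:: mInit M] rempty f.

End Semantics.

Definition equivalent (f g : hform) : Prop :=
  forall M : model, models M f <-> models M g.

End CTLKDelta.

From Stdlib Require Import Setoid.
From mathcomp Require Import all_boot.

(** Without [Delta] the record tuple stays empty, so along any evaluation of a
    CTL*K formula an agent only ever uses its initial observation.  Two models
    differing only in the indistinguishability relations of the other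
    observations therefore satisfy the same CTL*K formulas, while
    [Delta^o1_a K_a p] tells them apart when [~_o1] is the identity in one
    model and total in the other. *)

Set Implicit Arguments.
Unset Strict Implicit.
Unset Printing Implicit Defensive.

Scheme hform_mut := Induction for hform Sort Prop
with pform_mut := Induction for pform Sort Prop.

Lemma ol_nil (Obs : finType) (oi : Obs) (n : nat) : ol oi [::] n = [:: oi].
Proof. by elim: n => //= n ->. Qed.

Section WithSim.
Variables (Obs : finType) (m : nat) (M : model Obs m).
Variable sim : Obs -> rel (mS M).
Hypotheses (sim_refl : forall o, reflexive (sim o))
  (sim_sym : forall o, symmetric (sim o)) (sim_trans : forall o, transitive (sim o)).

Definition with_sim : model Obs m :=
  Model (@mT_total _ _ M) (@mV_sub _ _ M) sim_refl sim_sym sim_trans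
    (mInit M) (mObsInit M).

Hypothesis sim_init : forall a, sim (mObsInit M a) =2 @mSim _ _ M (mObsInit M a).

Lemma approx_rempty_with_sim a (h h' : seq (mS M)) :
  approx (M := with_sim) a (@rempty Obs m) h h' <->
  approx (M := M) a (@rempty Obs m) h h'.
Proof.
rewrite /approx /rempty /=.
split=> -[size_eq sim_h]; split=> // i lt_i o; rewrite ol_nil inE => /eqP ->;
  [rewrite -sim_init | rewrite sim_init]; by apply: sim_h; rewrite ?ol_nil ?mem_head.
Qed.

Lemma hsat_with_sim_noDelta (f : hform Obs m) : noDeltaH f -> forall h : seq (mS M),
  hsat (M := with_sim) h (@rempty Obs m) f <-> hsat (M := M) h (@rempty Obs m) f.
Proof.
set r := @rempty Obs m.
move: f; apply: (@hform_mut _ _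
  (fun f => noDeltaH f -> forall h : seq (mS M),
     hsat (M := with_sim) h r f <-> hsat (M := M) h r f)
  (fun q => noDeltaP q -> forall pi n,
     psat (M := with_sim) pi n r q <-> psat (M := M) pi n r q))
  => //=.
- by move=> g IH /IH eq_g h; rewrite eq_g.
- by move=> g1 IH1 g2 IH2 /andP[/IH1 eq1 /IH2 eq2] h; rewrite eq1 eq2.
- by move=> q IH /IH eq_q h; split=> sat_q pi pi_path pi_h; apply/eq_q; apply: sat_q.
- move=> a g IH /IH eq_g h.
  by split=> sat_g h' h'_hist /approx_rempty_with_sim h'_h; apply/eq_g; apply: sat_g.
- by move=> g IH /IH eq_g pi n; apply: eq_g.
- by move=> q IH /IH eq_q pi n; rewrite eq_q.
- by move=> q1 IH1 q2 IH2 /andP[/IH1 eq1 /IH2 eq2] pi n; rewrite eq1 eq2.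
- by move=> q IH /IH eq_q pi n; apply: eq_q.
- move=> q1 IH1 q2 IH2 /andP[/IH1 eq1 /IH2 eq2] pi n.
  by split=> -[k [le_nk [sat2 sat1]]]; exists k; split=> //; split=> [|j /sat1 ?];
    by [apply/eq1 | apply/eq2].
Qed.

Lemma models_with_sim_noDelta (f : hform Obs m) :
  noDeltaH f -> models with_sim f <-> models M f.
Proof. by move=> /hsat_with_sim_noDelta; apply. Qed.

End WithSim.

(** A two-state model: the state [b] is the truth value of atom [0], the
    initial state is [true] and every agent initially observes [o0]. *)
Section BoolModel.
Variables (Obs : finType) (m : nat) (o0 : Obs).

Definition blind_sim (o : Obs) : rel bool := fun x y => (o == o0) || (x == y).

Lemma blind_sim_refl o : reflexive (blind_sim o).
Proof. by move=> x; rewrite /blind_sim eqxx orbT. Qed.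

Lemma blind_sim_sym o : symmetric (blind_sim o).
Proof. by move=> x y; rewrite /blind_sim [x == y]eq_sym. Qed.

Lemma blind_sim_trans o : transitive (blind_sim o).
Proof. by move=> y x z; rewrite /blind_sim; case: (o == o0) => //= /eqP ->. Qed.

Lemma bool_total (s : bool) : exists s', (fun _ _ : bool => true) s s'.
Proof. by exists s. Qed.

Lemma bool_val_sub (s : bool) (p : nat) : s && (p == 0) -> p \in [:: 0].
Proof. by case/andP=> _ /eqP ->. Qed.

Definition blind_model : model Obs m :=
  Model bool_total bool_val_sub blind_sim_refl blind_sim_sym blind_sim_trans
    true (fun=> o0).

Definition total_sim (o : Obs) : rel bool := fun _ _ => true.

Definition total_model : model Obs m :=
  @with_sim _ _ blind_model total_sim (fun _ _ => erefl) (fun _ _ _ => erefl)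
    (fun _ _ _ _ _ _ => erefl).

Lemma total_model_noDelta (f : hform Obs m) :
  noDeltaH f -> models total_model f <-> models blind_model f.
Proof.
by apply: models_with_sim_noDelta => a x y /=; rewrite /blind_sim eqxx.
Qed.

Definition delta_know_atom (a : 'I_m) (o : Obs) : hform Obs m :=
  HDelta a o (HK a (HAtom _ _ 0)).

Lemma blind_model_delta_know (a : 'I_m) (o1 : Obs) :
  o1 != o0 -> models blind_model (delta_know_atom a o1).
Proof.
move=> neq_o1 h' _ [size_h' sim_h'] /=.
case: h' size_h' sim_h' => [|x [|]] //= _ /(_ 0 isT o1).
rewrite /rupd eqxx /= /obs_at /= !inE eqxx orbT /blind_sim (negbTE neq_o1) /=.
by move=> /(_ isT) /eqP ->.
Qed.

Lemma total_model_not_delta_know (a : 'I_m) (o : Obs) :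
  ~ models total_model (delta_know_atom a o).
Proof.
move=> sat_k; suff: false by []; by apply: (sat_k [:: false]); split=> // -[].
Qed.

End BoolModel.

Theorem mainTheorem11 (Obs : finType) (m : nat) :
  1 < #|Obs| -> 1 <= m ->
  (forall f : hform Obs m, noDeltaH f -> exists g : hform Obs m, equivalent f g) /\
  (exists f : hform Obs m, forall g : hform Obs m, noDeltaH g -> ~ equivalent f g).
Proof.
move=> /card_gt1P [o0 [o1 [_ _ neq_o01]]] m_gt0.
split=> [f _|]; first by exists f.
exists (delta_know_atom (Ordinal m_gt0) o1) => g g_noDelta equiv_g.
apply: (@total_model_not_delta_know Obs m o0 (Ordinal m_gt0) o1).
apply/equiv_g/total_model_noDelta/equiv_g => //.
by apply: blind_model_delta_know; rewrite eq_sym.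
Qed.
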